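(* Let $S$ be a $\mathcal C$-semigroup in $\mathbb N^d$ and $\mathbf f\in\mathbb N^d$ such that $\mathrm{PF}(S)=\{\mathbf f\}$ or $\mathrm{PF}(S)=\{\mathbf f,\mathbf f/2\}$. Then $S$ is $\mathcal C$-irreducible.
   Context: For a finitely generated submonoid $T$ of $\mathbb N^d$, $\mathrm{pos}(T)$ is the rational cone of nonnegative rational combinations of its generators, $\mathcal H(T)=(\mathrm{pos}(T)\setminus T)\cap\mathbb N^d$, and $\mathrm{PF}(T)=\{\mathbf a\in\mathcal H(T):\mathbf a+(T\setminus\{0\})\subseteq T\}$. $T$ is a $\mathcal C$-semigroup if $\mathcal H(T)$ is finite. A $\mathcal C$-semigroup $S$ is $\mathcal C$-irreducible if it cannot be expressed as the intersection of two finitely generated submonoids $S_1,S_2$ of $\mathbb N^d$ with $\mathrm{pos}(S_1)=\mathrm{pos}(S_2)=\mathrm{pos}(S)$, each containing $S$ properly. *)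

From mathcomp Require Import all_boot all_order all_algebra.
Set Implicit Arguments. Unset Strict Implicit. Unset Printing Implicit Defensive.
Import Order.TTheory GRing.Theory Num.Theory.
Local Open Scope ring_scope.

Definition natvec (d : nat) := {ffun 'I_d -> nat}.
Definition ratvec (d : nat) := {ffun 'I_d -> rat}.

Definition vzero (d : nat) : natvec d := [ffun => 0%N].
Definition vadd (d : nat) (a b : natvec d) : natvec d := [ffun i => (a i + b i)%N].

Definition vrat (d : nat) (a : natvec d) : ratvec d := [ffun i => (a i)%:R].

Definition nset (d : nat) := natvec d -> Prop.

Definition nat_comb (d : nat) (gs : seq (natvec d)) (c : seq nat) : natvec d :=
  [ffun i => (\sum_(k < size gs) nth 0%N c k * nth (vzero d) gs k i)%N].

Definition gen_monoid (d : nat) (gs : seq (natvec d)) : nset d :=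
  fun x => exists c : seq nat, x = nat_comb gs c.

Definition fg_submonoid (d : nat) (T : nset d) : Prop :=
  exists gs : seq (natvec d), forall x, T x <-> gen_monoid gs x.

(* pos(T): nonnegative rational combinations of elements of T
   (for finitely generated T this is the cone spanned by its generators) *)
Definition pos (d : nat) (T : nset d) : ratvec d -> Prop :=
  fun x => exists (gs : seq (natvec d)) (c : seq rat),
    (forall g, g \in gs -> T g) /\ (forall q, q \in c -> 0 <= q) /\
    x = [ffun i => \sum_(k < size gs) nth 0 c k * ((nth (vzero d) gs k i)%:R)].

Definition holes (d : nat) (T : nset d) : nset d :=
  fun a => pos T (vrat a) /\ ~ T a.

Definition PF (d : nat) (T : nset d) : nset d :=
  fun a => holes T a /\ (forall t, T t -> t <> vzero d -> T (vadd a t)).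

Definition C_semigroup (d : nat) (S : nset d) : Prop :=
  fg_submonoid S /\ exists l : seq (natvec d), forall a, holes S a -> a \in l.

Definition same_cone (d : nat) (T U : nset d) : Prop :=
  forall x, pos T x <-> pos U x.

Definition proper_sub (d : nat) (S T : nset d) : Prop :=
  (forall x, S x -> T x) /\ exists x, T x /\ ~ S x.

Definition C_irreducible (d : nat) (S : nset d) : Prop :=
  C_semigroup S /\
  ~ exists S1 S2 : nset d,
      fg_submonoid S1 /\ fg_submonoid S2 /\
      same_cone S1 S /\ same_cone S2 S /\
      proper_sub S S1 /\ proper_sub S S2 /\
      (forall x, S x <-> (S1 x /\ S2 x)).

(* If S is properly contained in an additively closed T inside pos(S), an
   element of T \ S is a hole of S; while it is not pseudo-Frobenius, adding a
   suitable nonzero element of S yields a hole of larger coordinate sum that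
   still lies in T.  Finiteness of H(S) stops this ascent at an element of
   PF(S) ∩ T.  So each S_i in a decomposition S = S_1 ∩ S_2 contains f or f/2,
   hence f = f/2 + f/2, so f ∈ S, contradicting f ∈ PF(S). *)
From Pilot Require Import Defs.
From mathcomp Require Import all_boot all_order all_algebra.
From mathcomp Require Import zify.
From Stdlib Require Import Classical.
Set Implicit Arguments.

Definition vsum d (x : natvec d) : nat := \sum_(i < d) x i.

Definition add_closed d (T : nset d) : Prop :=
  forall x y, T x -> T y -> T (vadd x y).

Lemma vsumD d (x y : natvec d) : vsum (vadd x y) = vsum x + vsum y.
Proof. by rewrite /vsum -big_split; apply: eq_bigr => i _; rewrite ffunE. Qed.

Lemma vsum_gt0 d (x : natvec d) : x <> vzero d -> 0 < vsum x.
Proof.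
move=> nz_x; rewrite lt0n sum_nat_eq0; apply/negP => /forallP x0.
by apply: nz_x; apply/ffunP => i; rewrite ffunE; apply/eqP/x0.
Qed.

Lemma fg_submonoid_add_closed d (T : nset d) : fg_submonoid T -> add_closed T.
Proof.
move=> [gs T_gen] x y /T_gen [cx ->] /T_gen [cy ->]; apply/T_gen.
exists (mkseq (fun k => nth 0 cx k + nth 0 cy k) (size gs)).
apply/ffunP => i; rewrite !ffunE -big_split; apply: eq_bigr => k _.
by rewrite nth_mkseq // mulnDl.
Qed.

Lemma pos_mem d (T : nset d) x : T x -> pos T (vrat x).
Proof.
move=> Tx; exists [:: x], [:: 1%R]; split; first by move=> g /[!inE] /eqP ->.
split; first by move=> q /[!inE] /eqP ->.
by apply/ffunP => i; rewrite !ffunE big_ord1 GRing.mul1r.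
Qed.

Lemma not_PF_hole d (S : nset d) x :
  holes S x -> ~ PF S x -> exists t, [/\ S t, t <> vzero d & ~ S (vadd x t)].
Proof.
move=> hole_x not_PF; apply: NNPP => no_t; apply: not_PF; split=> // t St nz_t.
by apply: NNPP => nSxt; apply: no_t; exists t.
Qed.

Section Ascent.

Variables (d : nat) (S T : nset d) (l : seq (natvec d)).
Hypothesis holesS : forall a, holes S a -> a \in l.
Hypothesis addT : add_closed T.
Hypothesis subST : forall x, S x -> T x.
Hypothesis posT : forall x, T x -> pos S (vrat x).

Lemma exists_PF_mem x : T x -> ~ S x -> exists2 y, T y & PF S y.
Proof.
pose B := \max_(y <- l) vsum y.
have [n] := ubnP (B - vsum x); elim: n x => [|n IH] x // lt_x Tx nSx.
have hole_x : holes S x by split; [apply: posT|].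
have [PFx | not_PF] := classic (PF S x); first by exists x.
have [t [St nz_t nSxt]] := not_PF_hole hole_x not_PF.
have Txt : T (vadd x t) by apply: addT => //; apply: subST.
have le_xt_B : vsum (vadd x t) <= B.
  by apply: leq_bigmax_seq => //; apply: holesS; split; [apply: posT|].
have := vsum_gt0 nz_t; rewrite vsumD in le_xt_B * => t_gt0.
by apply: (IH (vadd x t)) => //; rewrite vsumD; lia.
Qed.

End Ascent.

(* [Defs.] is needed: MathComp's lemma [proper_sub] shadows the definition. *)
Lemma PF_mem_proper_oversemigroup d (S T : nset d) :
  C_semigroup S -> fg_submonoid T -> same_cone T S -> Defs.proper_sub S T ->
  exists2 y, T y & PF S y.
Proof.
move=> [_ [l holesS]] fgT coneTS [subST [x [Tx nSx]]].
have posT y : T y -> pos S (vrat y) by move=> /pos_mem /coneTS.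
exact: (exists_PF_mem _ holesS (fg_submonoid_add_closed fgT) subST posT _ Tx nSx).
Qed.

Theorem proposition4p6 (d : nat) (S : nset d) (f : natvec d) :
  C_semigroup S ->
  ((forall a, PF S a <-> a = f) \/
   (exists h : natvec d, (forall i, (h i + h i)%N = f i) /\
      (forall a, PF S a <-> a = f \/ a = h))) ->
  C_irreducible S.
Proof.
move=> CS PF_S; split=> //.
case=> S1 [S2 [fg1 [fg2 [cone1 [cone2 [sub1 [sub2 S_cap]]]]]]].
have [PFf PF_gen_f] : PF S f /\
    forall U : nset d, add_closed U -> forall a, PF S a -> U a -> U f.
  case: PF_S => [PF_S | [h [hhf PF_S]]].
    by split=> [|U _ a /PF_S -> //]; apply/PF_S.
  have f_hh : f = vadd h h by apply/ffunP => i; rewrite ffunE hhf.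
  split=> [|U addU a /PF_S [] -> // Uh]; first by apply/PF_S; left.
  by rewrite f_hh; apply: addU.
have [y1 S1y1 PFy1] := PF_mem_proper_oversemigroup CS fg1 cone1 sub1.
have [y2 S2y2 PFy2] := PF_mem_proper_oversemigroup CS fg2 cone2 sub2.
have Sf : S f.
  apply/S_cap; split.
  - exact: PF_gen_f _ (fg_submonoid_add_closed fg1) _ PFy1 S1y1.
  - exact: PF_gen_f _ (fg_submonoid_add_closed fg2) _ PFy2 S2y2.
by case: PFf => -[_ nSf] _.
Qed.
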